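(* There is a positive constant $C$ such that for every real number $\lambda$ and every real $x\ge0$, $$\sum_{k=0}^\infty\frac{|H_k(\lambda)|}{k!}x^k\le C(1+x)^{1/2}\exp\Big(x^2+\frac{\lambda^2}{2}\Big),$$ where $H_k$ denotes the $k$-th Hermite polynomial.
   Context: The Hermite polynomials are $H_k(\lambda)=(-1)^ke^{\lambda^2}\frac{d^k}{d\lambda^k}\big(e^{-\lambda^2}\big)$, $k=0,1,2,\dots$; equivalently $\sum_{k\ge0}\frac{H_k(\lambda)}{k!}x^k=\exp(2\lambda x-x^2)$. *)

From Stdlib Require Import Reals Factorial.
From Coquelicot Require Import Coquelicot.
Open Scope R_scope.

Definition hermite (k : nat) (l : R) : R :=
  (-1) ^ k * exp (l ^ 2) * Derive_n (fun t => exp (- t ^ 2)) k l.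

From Stdlib Require Import Reals Factorial Lra Lia Psatz.
From Coquelicot Require Import Coquelicot.
Open Scope R_scope.

(* By Cauchy-Schwarz with weights (u/2)^k/k!, the sum is at most the square root of
   Mehler's sum  S_u(l) = sum_k H_k(l)^2 (u/2)^k/k! = exp (2 u l^2/(1+u)) / sqrt (1 - u^2)
   times  sum_k (2 x^2/u)^k/k! = exp (2 x^2/u).  Mehler's bound is proved for the partial
   sums by two monotonicity arguments: at l = 0, S_w(0)^2 (1 - w^2) decreases in w, because
   the partial sums satisfy the ODE (1 - w^2) S' = w S of 1/sqrt (1 - w^2) up to a term of
   fixed sign; and exp (-a l^2) (S - (a/2) c_N H_N^2), a = 2u/(1+u), decreases in |l|.
   Finally u = x (x+2)/(1+x)^2 gives 1/sqrt (1 - u^2) <= 1 + x and 2 x^2/u <= 2 x^2 + 2,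
   whence C = e. *)

Lemma le_at_0_of_deriv_toward_nonpos (f df : R -> R) (b : R) :
  (forall x, is_derive f x (df x)) ->
  (forall x, Rmin 0 b <= x <= Rmax 0 b -> df x * b <= 0) -> f b <= f 0.
Proof.
  intros Hd Hsign.
  destruct (MVT_gen f 0 b df) as [c [Hc Hmvt]].
  - intros x _; apply Hd.
  - intros x _; apply continuity_pt_filterlim.
    apply (ex_derive_continuous (K := R_AbsRing) (V := R_NormedModule)).
    exists (df x); apply Hd.
  - specialize (Hsign c Hc); lra.
Qed.

Lemma exp_le_compat x y : x <= y -> exp x <= exp y.
Proof. intros [Hlt | ->]; [left; apply exp_increasing, Hlt | right; reflexivity]. Qed.

Lemma series_le_of_partial_sums_le (a : nat -> R) (M : R) :
  (forall n, 0 <= a n) -> (forall N, sum_f_R0 a N <= M) ->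
  ex_series a /\ Series a <= M.
Proof.
  intros Ha HM.
  assert (Hbound : forall N, sum_n a N <= M) by (intros N; rewrite sum_n_Reals; apply HM).
  destruct (ex_finite_lim_seq_incr (sum_n a) M) as [s Hs]; [| exact Hbound |].
  { intros n; rewrite sum_Sn; specialize (Ha (S n)); simpl; unfold plus; simpl; lra. }
  split; [now exists s |].
  rewrite (is_series_unique a s Hs).
  apply (is_lim_seq_le (sum_n a) (fun _ => M) s M Hbound Hs), is_lim_seq_const.
Qed.

Lemma sum_f_R0_sqr_le (s p q : nat -> R) (N : nat) :
  (forall k, 0 <= p k) -> (forall k, 0 <= q k) -> (forall k, s k ^ 2 <= p k * q k) ->
  sum_f_R0 s N ^ 2 <= sum_f_R0 p N * sum_f_R0 q N.
Proof.
  intros Hp Hq Hs.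
  assert (Hp_sum : forall n, 0 <= sum_f_R0 p n) by (intros n; apply cond_pos_sum, Hp).
  assert (Hq_sum : forall n, 0 <= sum_f_R0 q n) by (intros n; apply cond_pos_sum, Hq).
  induction N as [|N IH]; [apply Hs |].
  rewrite !tech5.
  set (s_N := sum_f_R0 s N) in *; set (p_N := sum_f_R0 p N) in *; set (q_N := sum_f_R0 q N) in *.
  specialize (Hs (S N)); specialize (Hp (S N)); specialize (Hq (S N)).
  assert (Hp_N := Hp_sum N); assert (Hq_N := Hq_sum N).
  assert (Hcross : 2 * s_N * s (S N) <= p_N * q (S N) + p (S N) * q_N).
  { apply Rsqr_incr_0_var; [| apply Rplus_le_le_0_compat; apply Rmult_le_pos; assumption].
    assert (s_N ^ 2 * s (S N) ^ 2 <= (p_N * q_N) * (p (S N) * q (S N)))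
      by (apply Rmult_le_compat; auto using pow2_ge_0).
    assert (0 <= (p_N * q (S N) - p (S N) * q_N) ^ 2) by apply pow2_ge_0.
    unfold Rsqr; nra. }
  nra.
Qed.

Fixpoint hermite_poly (n : nat) (t : R) : R :=
  match n with
  | O => 1
  | S O => 2 * t
  | S ((S p) as m) => 2 * t * hermite_poly m t - 2 * INR m * hermite_poly p t
  end.

Lemma hermite_poly_S n t :
  hermite_poly (S n) t = 2 * t * hermite_poly n t - 2 * INR n * hermite_poly (pred n) t.
Proof. destruct n; simpl; [ring | reflexivity]. Qed.

Lemma is_derive_hermite_poly n t :
  is_derive (hermite_poly n) t (2 * INR n * hermite_poly (pred n) t).
Proof.
  revert t; induction n as [n IH] using Wf_nat.lt_wf_ind; intros t.
  destruct n as [|[|n]].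
  - simpl. auto_derive; [easy | ring].
  - simpl. auto_derive; [easy | ring].
  - apply (is_derive_ext
             (fun t => 2 * t * hermite_poly (S n) t - 2 * INR (S n) * hermite_poly n t)).
    { intros; symmetry; apply hermite_poly_S. }
    replace (2 * INR (S (S n)) * hermite_poly (pred (S (S n))) t)
      with (2 * 1 * hermite_poly (S n) t + 2 * t * (2 * INR (S n) * hermite_poly n t)
            - 2 * INR (S n) * (2 * INR n * hermite_poly (pred n) t))
      by (simpl pred; rewrite (hermite_poly_S n t), !S_INR; ring).
    apply (is_derive_minus (fun t => 2 * t * hermite_poly (S n) t)
                           (fun t => 2 * INR (S n) * hermite_poly n t)).
    + apply Derive.is_derive_mult; [| apply IH; lia].
      auto_derive; [easy | ring].
    + apply is_derive_scal, IH; lia.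
Qed.

Lemma Derive_n_exp_neg_sqr n t :
  Derive_n (fun t => exp (- t ^ 2)) n t = (-1) ^ n * hermite_poly n t * exp (- t ^ 2).
Proof.
  revert t; induction n as [|n IH]; intros t; [simpl; ring |].
  change (Derive (Derive_n (fun t => exp (- t ^ 2)) n) t
          = (-1) ^ S n * hermite_poly (S n) t * exp (- t ^ 2)).
  rewrite (Derive_ext _ _ t IH).
  apply is_derive_unique.
  replace ((-1) ^ S n * hermite_poly (S n) t * exp (- t ^ 2))
    with ((-1) ^ n * (2 * INR n * hermite_poly (pred n) t) * exp (- t ^ 2)
          + (-1) ^ n * hermite_poly n t * (- (2 * t) * exp (- t ^ 2)))
    by (rewrite hermite_poly_S; simpl; ring).
  apply (Derive.is_derive_mult (fun t => (-1) ^ n * hermite_poly n t) (fun t => exp (- t ^ 2)));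
    [apply is_derive_scal, is_derive_hermite_poly |].
  auto_derive; [easy | simpl; ring].
Qed.

Lemma hermite_eq_poly k l : hermite k l = hermite_poly k l.
Proof.
  unfold hermite; rewrite Derive_n_exp_neg_sqr.
  replace ((-1) ^ k * exp (l ^ 2) * ((-1) ^ k * hermite_poly k l * exp (- l ^ 2)))
    with (((-1) * (-1)) ^ k * exp (l ^ 2 + - l ^ 2) * hermite_poly k l)
    by (rewrite Rpow_mult_distr, exp_plus; ring).
  replace ((-1) * (-1)) with 1 by ring.
  rewrite pow1, Rplus_opp_r, exp_0; ring.
Qed.

Definition mehler_coef (u : R) (k : nat) : R := (u / 2) ^ k / INR (fact k).

Definition mehler_sum (u : R) (N : nat) (l : R) : R :=
  sum_f_R0 (fun k => mehler_coef u k * hermite_poly k l ^ 2) N.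

Lemma mehler_coef_S u k : mehler_coef u (S k) = mehler_coef u k * (u / 2) / INR (S k).
Proof.
  unfold mehler_coef; rewrite fact_simpl, mult_INR; simpl pow.
  field; split; [apply INR_fact_neq_0 | apply not_0_INR; lia].
Qed.

Lemma mehler_coef_ge0 u k : 0 <= u -> 0 <= mehler_coef u k.
Proof.
  intros Hu; unfold mehler_coef.
  apply Rmult_le_pos; [apply pow_le; lra | left; apply Rinv_0_lt_compat, INR_fact_lt_0].
Qed.

Lemma mehler_sum_ge0 u N l : 0 <= u -> 0 <= mehler_sum u N l.
Proof.
  intros Hu; apply cond_pos_sum; intros k.
  apply Rmult_le_pos; [apply mehler_coef_ge0, Hu | apply pow2_ge_0].
Qed.

Section MehlerSumInL.

Variable u : R.
Hypothesis u_ge0 : 0 <= u.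

Let a := 2 * u / (1 + u).

Lemma mehler_rate_bounds : 0 <= a < 2.
Proof.
  unfold a; split.
  - apply Rmult_le_pos; [lra | left; apply Rinv_0_lt_compat; lra].
  - apply Rmult_lt_reg_r with (1 + u); [lra |].
    unfold Rdiv; rewrite Rmult_assoc, Rinv_l; lra.
Qed.

(* Truncation of the equation dS/dl = 2 a l S satisfied by the full series. *)
Lemma is_derive_mehler_sum N l :
  is_derive (mehler_sum u N) l
    (2 * a * l * mehler_sum u N l - a * mehler_coef u N * hermite_poly N l * hermite_poly (S N) l).
Proof.
  revert l; induction N as [|N IH]; intros l.
  - unfold mehler_sum; simpl; auto_derive; [easy |].
    unfold a, mehler_coef; simpl; field; lra.
  - apply (is_derive_ext
             (fun l => mehler_sum u N l + mehler_coef u (S N) * hermite_poly (S N) l ^ 2)).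
    { intros t; unfold mehler_sum; symmetry; apply tech5. }
    replace (2 * a * l * mehler_sum u (S N) l
             - a * mehler_coef u (S N) * hermite_poly (S N) l * hermite_poly (S (S N)) l)
      with ((2 * a * l * mehler_sum u N l
             - a * mehler_coef u N * hermite_poly N l * hermite_poly (S N) l)
            + mehler_coef u (S N)
              * (INR 2 * (2 * INR (S N) * hermite_poly N l) * hermite_poly (S N) l ^ 1)).
    + apply (is_derive_plus (mehler_sum u N)
                            (fun l => mehler_coef u (S N) * hermite_poly (S N) l ^ 2));
        [apply IH |].
      apply is_derive_scal, (is_derive_pow (hermite_poly (S N)) 2), is_derive_hermite_poly.
    + unfold mehler_sum; rewrite tech5, (hermite_poly_S (S N) l), mehler_coef_S; simpl pred.
      assert (INR (S N) <> 0) by (apply not_0_INR; lia).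
      replace (INR 2) with 2 by (simpl; ring).
      unfold a; field; lra.
Qed.

Definition mehler_envelope (N : nat) (l : R) : R :=
  exp (- (a * l ^ 2)) * (mehler_sum u N l - a / 2 * mehler_coef u N * hermite_poly N l ^ 2).

Lemma is_derive_mehler_envelope N l :
  is_derive (mehler_envelope N) l
    (- (a * (2 - a) * mehler_coef u N * l * hermite_poly N l ^ 2 * exp (- (a * l ^ 2)))).
Proof.
  unfold mehler_envelope.
  replace (- (a * (2 - a) * mehler_coef u N * l * hermite_poly N l ^ 2 * exp (- (a * l ^ 2))))
    with (- (2 * a * l) * exp (- (a * l ^ 2))
            * (mehler_sum u N l - a / 2 * mehler_coef u N * hermite_poly N l ^ 2)
          + exp (- (a * l ^ 2))
            * ((2 * a * l * mehler_sum u N l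
                - a * mehler_coef u N * hermite_poly N l * hermite_poly (S N) l)
               - a / 2 * mehler_coef u N
                 * (INR 2 * (2 * INR N * hermite_poly (pred N) l) * hermite_poly N l ^ 1)))
    by (rewrite (hermite_poly_S N l); replace (INR 2) with 2 by (simpl; ring); field).
  apply (Derive.is_derive_mult (fun l => exp (- (a * l ^ 2)))
           (fun l => mehler_sum u N l - a / 2 * mehler_coef u N * hermite_poly N l ^ 2)).
  - auto_derive; [easy | simpl; ring].
  - apply (is_derive_minus (mehler_sum u N)
                           (fun l => a / 2 * mehler_coef u N * hermite_poly N l ^ 2));
      [apply is_derive_mehler_sum |].
    apply is_derive_scal, (is_derive_pow (hermite_poly N) 2), is_derive_hermite_poly.
Qed.

Lemma mehler_envelope_le_origin N l : mehler_envelope N l <= mehler_envelope N 0.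
Proof.
  apply le_at_0_of_deriv_toward_nonpos with (1 := is_derive_mehler_envelope N).
  intros t Ht.
  assert (Htl : 0 <= t * l).
  { destruct (Rle_dec 0 l).
    - rewrite Rmin_left, Rmax_right in Ht by lra; nra.
    - rewrite Rmin_right, Rmax_left in Ht by lra; nra. }
  destruct mehler_rate_bounds.
  assert (0 <= a * (2 - a) * mehler_coef u N * hermite_poly N t ^ 2 * exp (- (a * t ^ 2))).
  { assert (0 <= a * (2 - a)) by nra.
    assert (0 <= mehler_coef u N) by apply mehler_coef_ge0, u_ge0.
    assert (0 <= hermite_poly N t ^ 2) by apply pow2_ge_0.
    assert (0 < exp (- (a * t ^ 2))) by apply exp_pos.
    apply Rmult_le_pos; [apply Rmult_le_pos; [apply Rmult_le_pos |] |]; lra. }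
  nra.
Qed.

Lemma mehler_sum_le_origin N l : mehler_sum u N l <= exp (a * l ^ 2) * mehler_sum u (S N) 0.
Proof.
  assert (Henv := mehler_envelope_le_origin (S N) l).
  unfold mehler_envelope in Henv.
  replace (exp (- (a * 0 ^ 2))) with 1 in Henv by (rewrite <- exp_0; f_equal; ring).
  assert (Hexp : exp (a * l ^ 2) * exp (- (a * l ^ 2)) = 1)
    by (rewrite <- exp_plus, Rplus_opp_r; apply exp_0).
  assert (Hsum : mehler_sum u (S N) l
                 = mehler_sum u N l + mehler_coef u (S N) * hermite_poly (S N) l ^ 2)
    by apply tech5.
  assert (0 <= mehler_coef u (S N) * hermite_poly (S N) l ^ 2)
    by (apply Rmult_le_pos; [apply mehler_coef_ge0, u_ge0 | apply pow2_ge_0]).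
  assert (0 <= mehler_coef u (S N) * hermite_poly (S N) 0 ^ 2)
    by (apply Rmult_le_pos; [apply mehler_coef_ge0, u_ge0 | apply pow2_ge_0]).
  assert (Hpos := exp_pos (a * l ^ 2)).
  destruct mehler_rate_bounds.
  apply Rmult_le_compat_l with (r := exp (a * l ^ 2)) in Henv; [| lra].
  rewrite <- Rmult_assoc, Hexp, Rmult_1_l in Henv.
  assert (a / 2 * mehler_coef u (S N) * hermite_poly (S N) l ^ 2
          <= mehler_coef u (S N) * hermite_poly (S N) l ^ 2) by nra.
  assert (0 <= exp (a * l ^ 2) * (a / 2 * mehler_coef u (S N) * hermite_poly (S N) 0 ^ 2)).
  { apply Rmult_le_pos; [lra |].
    replace (a / 2 * mehler_coef u (S N) * hermite_poly (S N) 0 ^ 2)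
      with (a / 2 * (mehler_coef u (S N) * hermite_poly (S N) 0 ^ 2)) by ring.
    apply Rmult_le_pos; lra. }
  lra.
Qed.

End MehlerSumInL.

Definition mehler_coef_deriv (w : R) (k : nat) : R :=
  match k with O => 0 | S j => mehler_coef w j / 2 end.

Lemma is_derive_mehler_coef k w :
  is_derive (fun w => mehler_coef w k) w (mehler_coef_deriv w k).
Proof.
  destruct k as [|j]; unfold mehler_coef, mehler_coef_deriv.
  - auto_derive; [easy | ring].
  - auto_derive; [easy |]; unfold mehler_coef.
    change (match j with 0%nat => 1 | S _ => INR j + 1 end) with (INR (S j)).
    change (fact j + j * fact j)%nat with (fact (S j)).
    rewrite fact_simpl, mult_INR.
    change (w * / 2) with (w / 2).
    field; split; [apply INR_fact_neq_0 | apply not_0_INR; lia].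
Qed.

Lemma is_derive_mehler_sum_param N l w :
  is_derive (fun w => mehler_sum w N l) w
    (sum_f_R0 (fun k => mehler_coef_deriv w k * hermite_poly k l ^ 2) N).
Proof.
  assert (Hterm : forall k, is_derive (fun w => mehler_coef w k * hermite_poly k l ^ 2) w
                                      (mehler_coef_deriv w k * hermite_poly k l ^ 2)).
  { intros k.
    apply (is_derive_ext (fun w => hermite_poly k l ^ 2 * mehler_coef w k));
      [intros; apply Rmult_comm |].
    rewrite Rmult_comm; apply is_derive_scal, is_derive_mehler_coef. }
  induction N as [|N IH]; [apply Hterm |].
  apply (is_derive_ext
           (fun w => mehler_sum w N l + mehler_coef w (S N) * hermite_poly (S N) l ^ 2)).
  { intros t; unfold mehler_sum; symmetry; apply tech5. }
  rewrite tech5.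
  apply (is_derive_plus (fun w => mehler_sum w N l)
                        (fun w => mehler_coef w (S N) * hermite_poly (S N) l ^ 2));
    [apply IH | apply Hterm].
Qed.

(* Truncation of the equation (1 - w^2) Z' = w Z satisfied by Z(w) = 1/sqrt (1 - w^2). *)
Lemma mehler_sum_origin_param_identity N w :
  (1 - w ^ 2) * sum_f_R0 (fun k => mehler_coef_deriv w k * hermite_poly k 0 ^ 2) N
  - w * mehler_sum w N 0
  = - w * (INR N * mehler_coef w (pred N) * hermite_poly (pred N) 0 ^ 2
           + INR (S N) * mehler_coef w N * hermite_poly N 0 ^ 2).
Proof.
  induction N as [|N IH].
  - unfold mehler_sum, mehler_coef; simpl; field.
  - transitivity ((1 - w ^ 2) * sum_f_R0 (fun k => mehler_coef_deriv w k * hermite_poly k 0 ^ 2) N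
                  - w * mehler_sum w N 0
                  + ((1 - w ^ 2) * mehler_coef_deriv w (S N) * hermite_poly (S N) 0 ^ 2
                     - w * (mehler_coef w (S N) * hermite_poly (S N) 0 ^ 2))).
    { unfold mehler_sum; rewrite !tech5; ring. }
    rewrite IH; simpl pred; unfold mehler_coef_deriv.
    destruct N as [|m].
    + unfold mehler_coef; simpl; field.
    + rewrite (hermite_poly_S (S m) 0), (mehler_coef_S w (S m)), (mehler_coef_S w m); simpl pred.
      assert (0 <= INR m) by apply pos_INR.
      rewrite !S_INR; field; lra.
Qed.

Lemma mehler_sum_0 N l : mehler_sum 0 N l = 1.
Proof.
  induction N as [|N IH]; unfold mehler_sum in *.
  - unfold mehler_coef; simpl; field.
  - rewrite tech5, IH; unfold mehler_coef.
    replace (0 / 2) with 0 by field; rewrite pow_i by lia; unfold Rdiv; ring.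
Qed.

Lemma mehler_sum_origin_bound u N : 0 <= u -> mehler_sum u N 0 ^ 2 * (1 - u ^ 2) <= 1.
Proof.
  intros Hu.
  set (Z := fun w => mehler_sum w N 0).
  set (Z' := fun w => sum_f_R0 (fun k => mehler_coef_deriv w k * hermite_poly k 0 ^ 2) N).
  assert (HZ : forall w, is_derive Z w (Z' w)) by (intros w; apply is_derive_mehler_sum_param).
  apply Rle_trans with (Z 0 ^ 2 * (1 - 0 ^ 2));
    [| right; unfold Z; rewrite mehler_sum_0; ring].
  apply (le_at_0_of_deriv_toward_nonpos (fun w => Z w ^ 2 * (1 - w ^ 2))
           (fun w => 2 * Z w * ((1 - w ^ 2) * Z' w - w * Z w))).
  - intros w.
    replace (2 * Z w * ((1 - w ^ 2) * Z' w - w * Z w))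
      with (INR 2 * Z' w * Z w ^ 1 * (1 - w ^ 2) + Z w ^ 2 * (- (2 * w)))
      by (replace (INR 2) with 2 by (simpl; ring); ring).
    apply (Derive.is_derive_mult (fun w => Z w ^ 2) (fun w => 1 - w ^ 2)).
    + apply (is_derive_pow Z 2), HZ.
    + auto_derive; [easy | simpl; ring].
  - intros w Hw; rewrite Rmin_left, Rmax_right in Hw by lra.
    unfold Z, Z'; rewrite mehler_sum_origin_param_identity.
    set (T := INR N * mehler_coef w (pred N) * hermite_poly (pred N) 0 ^ 2
              + INR (S N) * mehler_coef w N * hermite_poly N 0 ^ 2).
    assert (0 <= mehler_sum w N 0) by (apply mehler_sum_ge0; lra).
    assert (0 <= T).
    { assert (0 <= mehler_coef w (pred N)) by (apply mehler_coef_ge0; lra).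
      assert (0 <= mehler_coef w N) by (apply mehler_coef_ge0; lra).
      assert (0 <= hermite_poly (pred N) 0 ^ 2) by apply pow2_ge_0.
      assert (0 <= hermite_poly N 0 ^ 2) by apply pow2_ge_0.
      assert (0 <= INR N) by apply pos_INR.
      assert (0 <= INR (S N)) by apply pos_INR.
      apply Rplus_le_le_0_compat; (apply Rmult_le_pos; [apply Rmult_le_pos |]); assumption. }
    assert (0 <= mehler_sum w N 0 * T) by (apply Rmult_le_pos; assumption).
    assert (0 <= w * u) by nra.
    replace (2 * mehler_sum w N 0 * (- w * T) * u) with (- 2 * (mehler_sum w N 0 * T) * (w * u))
      by ring.
    nra.
Qed.

Theorem mehler_sum_bound u N l :
  0 <= u -> mehler_sum u N l ^ 2 * (1 - u ^ 2) <= exp (2 * u / (1 + u) * l ^ 2) ^ 2.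
Proof.
  intros Hu.
  destruct (Rle_dec 0 (1 - u ^ 2)) as [Hu1 | Hu1]; [| nra].
  assert (Hl := mehler_sum_le_origin u Hu N l).
  assert (H0 := mehler_sum_origin_bound u (S N) Hu).
  assert (0 <= mehler_sum u N l) by (apply mehler_sum_ge0, Hu).
  assert (0 <= mehler_sum u (S N) 0) by (apply mehler_sum_ge0, Hu).
  set (E := exp (2 * u / (1 + u) * l ^ 2)) in *.
  assert (mehler_sum u N l ^ 2 <= E ^ 2 * mehler_sum u (S N) 0 ^ 2).
  { rewrite <- Rpow_mult_distr; apply pow_incr; lra. }
  assert (0 <= E ^ 2) by apply pow2_ge_0.
  nra.
Qed.

Lemma mehler_sum_bound_at_parameter x N l :
  0 <= x -> mehler_sum (x * (x + 2) / (1 + x) ^ 2) N l <= exp (l ^ 2) * (1 + x).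
Proof.
  intros Hx.
  set (u := x * (x + 2) / (1 + x) ^ 2).
  assert (Hu0 : 0 <= u)
    by (apply Rmult_le_pos; [nra | left; apply Rinv_0_lt_compat; nra]).
  assert (H1u : 1 - u = 1 / (1 + x) ^ 2) by (unfold u; field; lra).
  assert (Hu1 : u <= 1) by (assert (0 < 1 / (1 + x) ^ 2) by (apply Rdiv_lt_0_compat; nra); lra).
  assert (Hgap : 1 <= (1 - u ^ 2) * (1 + x) ^ 2).
  { replace ((1 - u ^ 2) * (1 + x) ^ 2) with ((1 + u) * ((1 - u) * (1 + x) ^ 2)) by ring.
    rewrite H1u; replace (1 / (1 + x) ^ 2 * (1 + x) ^ 2) with 1 by (field; lra); lra. }
  assert (Hrate : exp (2 * u / (1 + u) * l ^ 2) <= exp (l ^ 2)).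
  { apply exp_le_compat; rewrite <- (Rmult_1_l (l ^ 2)) at 2.
    apply Rmult_le_compat_r; [apply pow2_ge_0 |].
    apply Rmult_le_reg_r with (1 + u); [lra |].
    unfold Rdiv; rewrite Rmult_assoc, Rinv_l; lra. }
  assert (Hmehler := mehler_sum_bound u N l Hu0).
  assert (0 <= mehler_sum u N l) by (apply mehler_sum_ge0, Hu0).
  assert (0 < exp (2 * u / (1 + u) * l ^ 2)) by apply exp_pos.
  assert (0 < exp (l ^ 2)) by apply exp_pos.
  apply Rsqr_incr_0_var; [rewrite !Rsqr_pow2 | nra].
  set (A := mehler_sum u N l) in *; set (Ea := exp (2 * u / (1 + u) * l ^ 2)) in *.
  assert (A ^ 2 <= A ^ 2 * ((1 - u ^ 2) * (1 + x) ^ 2))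
    by (rewrite <- (Rmult_1_r (A ^ 2)) at 1; apply Rmult_le_compat_l; [apply pow2_ge_0 | lra]).
  assert (A ^ 2 * (1 - u ^ 2) * (1 + x) ^ 2 <= Ea ^ 2 * (1 + x) ^ 2)
    by (apply Rmult_le_compat_r; [apply pow2_ge_0 | lra]).
  assert (Ea ^ 2 <= exp (l ^ 2) ^ 2) by (apply pow_incr; lra).
  assert (Ea ^ 2 * (1 + x) ^ 2 <= exp (l ^ 2) ^ 2 * (1 + x) ^ 2)
    by (apply Rmult_le_compat_r; [apply pow2_ge_0 | lra]).
  rewrite Rpow_mult_distr; lra.
Qed.

Lemma hermite_poly_abs_partial_sum_sqr_le x l N :
  0 <= x ->
  sum_f_R0 (fun k => Rabs (hermite_poly k l) / INR (fact k) * x ^ k) N ^ 2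
  <= (exp 1 * sqrt (1 + x) * exp (x ^ 2 + l ^ 2 / 2)) ^ 2.
Proof.
  intros Hx.
  set (u := x * (x + 2) / (1 + x) ^ 2).
  set (y := 2 * x * (1 + x) ^ 2 / (x + 2)).
  assert (Hu0 : 0 <= u) by (apply Rmult_le_pos; [nra | left; apply Rinv_0_lt_compat; nra]).
  assert (Hy0 : 0 <= y) by (apply Rmult_le_pos; [nra | left; apply Rinv_0_lt_compat; lra]).
  assert (Huy : u / 2 * y = x ^ 2) by (unfold u, y; field; lra).
  assert (Hy : y <= 2 * x ^ 2 + 2).
  { apply Rmult_le_reg_r with (x + 2); [lra |].
    unfold y, Rdiv; rewrite Rmult_assoc, Rinv_l; nra. }
  assert (Hcs : sum_f_R0 (fun k => Rabs (hermite_poly k l) / INR (fact k) * x ^ k) N ^ 2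
                <= mehler_sum u N l * sum_f_R0 (fun k => y ^ k / INR (fact k)) N).
  { apply sum_f_R0_sqr_le.
    - intros k; apply Rmult_le_pos; [apply mehler_coef_ge0, Hu0 | apply pow2_ge_0].
    - intros k; apply Rmult_le_pos;
        [apply pow_le, Hy0 | left; apply Rinv_0_lt_compat, INR_fact_lt_0].
    - intros k; right; unfold mehler_coef.
      assert (INR (fact k) <> 0) by apply INR_fact_neq_0.
      rewrite <- (pow2_abs (hermite_poly k l)).
      replace ((u / 2) ^ k / INR (fact k) * Rabs (hermite_poly k l) ^ 2 * (y ^ k / INR (fact k)))
        with ((u / 2 * y) ^ k * Rabs (hermite_poly k l) ^ 2 / INR (fact k) ^ 2)
        by (rewrite Rpow_mult_distr; field; assumption).
      rewrite Huy, <- pow_mult, Nat.mul_comm, pow_mult.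
      field; assumption. }
  assert (HA := mehler_sum_bound_at_parameter x N l Hx); fold u in HA.
  assert (Htaylor := exp_ge_taylor y N Hy0).
  assert (Hrhs : (exp 1 * sqrt (1 + x) * exp (x ^ 2 + l ^ 2 / 2)) ^ 2
                 = exp (l ^ 2) * (1 + x) * exp (2 * x ^ 2 + 2)).
  { rewrite !Rpow_mult_distr, pow2_sqrt by lra.
    replace (2 * x ^ 2 + 2) with (1 + 1 + (x ^ 2 + l ^ 2 / 2) + (x ^ 2 + l ^ 2 / 2) - l ^ 2)
      by field.
    rewrite Rminus_def, !exp_plus, exp_Ropp.
    assert (exp (l ^ 2) <> 0) by apply Rgt_not_eq, exp_pos.
    field; assumption. }
  rewrite Hrhs.
  assert (0 <= mehler_sum u N l) by (apply mehler_sum_ge0, Hu0).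
  assert (exp y <= exp (2 * x ^ 2 + 2)) by (apply exp_le_compat, Hy).
  assert (0 < exp (l ^ 2)) by apply exp_pos.
  assert (0 < exp y) by apply exp_pos.
  nra.
Qed.

Theorem lemma8 :
  exists C : R, 0 < C /\
    forall l x : R, 0 <= x ->
      ex_series (fun k => Rabs (hermite k l) / INR (fact k) * x ^ k) /\
      Series (fun k => Rabs (hermite k l) / INR (fact k) * x ^ k)
        <= C * sqrt (1 + x) * exp (x ^ 2 + l ^ 2 / 2).
Proof.
  exists (exp 1); split; [apply exp_pos |].
  intros l x Hx.
  apply series_le_of_partial_sums_le.
  - intros k; apply Rmult_le_pos; [| apply pow_le, Hx].
    apply Rmult_le_pos; [apply Rabs_pos | left; apply Rinv_0_lt_compat, INR_fact_lt_0].
  - intros N.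
    rewrite (sum_eq _ (fun k => Rabs (hermite_poly k l) / INR (fact k) * x ^ k))
      by (intros k _; rewrite hermite_eq_poly; reflexivity).
    apply Rsqr_incr_0_var; [rewrite !Rsqr_pow2; apply hermite_poly_abs_partial_sum_sqr_le, Hx |].
    assert (0 < sqrt (1 + x)) by (apply sqrt_lt_R0; lra).
    assert (0 < exp 1) by apply exp_pos.
    assert (0 < exp (x ^ 2 + l ^ 2 / 2)) by apply exp_pos.
    apply Rmult_le_pos; [apply Rmult_le_pos |]; lra.
Qed.
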